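(* For every integer $m\ge1$: (i) $\mu_{m,i}(k_1,k_2,k_3,k_4)\in(k_1,k_2,k_3)\,\mathbb{Z}[k_1,k_2,k_3,k_4]$ for $i=1,2,3$; (ii) $\mu_{m,4}(k_1,k_2,k_3,k_4)\in k_4^{m^2}+(k_1,k_2,k_3)^2\,\mathbb{Z}[k_1,k_2,k_3,k_4]$.
   Context: Let $C/\mathbb{Q}$ be the genus $2$ curve $y^2=x^5+f_4x^4+f_3x^3+f_2x^2+f_1x+f_0$ with $f_i\in\mathbb{Z}$, $J$ its Jacobian, and $\kappa\colon J\to\mathbb{P}^3$ Flynn's Kummer map $[(x_1,y_1)+(x_2,y_2)-2\infty]\mapsto[1:x_1+x_2:x_1x_2:\beta_0]$ (so the identity maps to $[0:0:0:1]$). Let $\delta_1,\dots,\delta_4\in\mathbb{Z}[k_1,\dots,k_4]$ be Flynn's explicit quartic duplication polynomials for this Kummer surface (Cassels–Flynn, Appendix C of Flynn), and $B_{ij}$ the explicit integral biquadratic forms of Cassels–Flynn for this Kummer surface. Uchida's polynomials $\mu_{m,i}\in\mathbb{Z}[k_1,\dots,k_4]$ are defined by $\mu_{0,1}=\mu_{0,2}=\mu_{0,3}=0$, $\mu_{0,4}=1$, $\mu_{1,i}=k_i$, $\mu_{2m,i}=\delta_i(\mu_m)$ and $\mu_{2m+1,i}k_i=B_{ii}(\mu_{m+1},\mu_m)$ for $m\ge1$, where $\mu_m=(\mu_{m,1},\dots,\mu_{m,4})$. *)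

From HB Require Import structures.
From mathcomp Require Import all_boot all_order all_algebra.
From mathcomp.multinomials Require Import mpoly.

Set Implicit Arguments.
Unset Strict Implicit.
Unset Printing Implicit Defensive.

Import Order.TTheory GRing.Theory Num.Theory.
Local Open Scope ring_scope.

(* Curve  C : y^2 = x^5 + f4 x^4 + f3 x^3 + f2 x^2 + f1 x + f0,  f_i in Z.   *)
(* (Sextic model with f5 = 1, f6 = 0.)                                       *)

Definition quintic (f0 f1 f2 f3 f4 : int) : {poly rat} :=
  'X^5 + (f4%:~R)%:P * 'X^4 + (f3%:~R)%:P * 'X^3 + (f2%:~R)%:P * 'X^2
  + (f1%:~R)%:P * 'X + (f0%:~R)%:P.

Definition genus2_quintic (f0 f1 f2 f3 f4 : int) : Prop :=
  coprimep (quintic f0 f1 f2 f3 f4) (quintic f0 f1 f2 f3 f4)^`().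

Section Forms.
Variable R : comNzRingType.

(* Flynn's Kummer surface equation  K = K2 k4^2 + K1 k4 + K0  (f5=1, f6=0). *)
Definition Kummer (f0 f1 f2 f3 f4 : int) (k1 k2 k3 k4 : R) : R :=
  let F0 : R := f0%:~R in let F1 : R := f1%:~R in let F2 : R := f2%:~R in
  let F3 : R := f3%:~R in let F4 : R := f4%:~R in
  (k2 ^+ 2 - 4 * k1 * k3) * k4 ^+ 2
  - 2 * (2 * F0 * k1 ^+ 3 + F1 * k1 ^+ 2 * k2 + 2 * F2 * k1 ^+ 2 * k3
         + F3 * k1 * k2 * k3 + 2 * F4 * k1 * k3 ^+ 2 + k2 * k3 ^+ 2) * k4
  + ((F1 ^+ 2 - 4 * F0 * F2) * k1 ^+ 4 - 4 * F0 * F3 * k1 ^+ 3 * k2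
     - 2 * F1 * F3 * k1 ^+ 3 * k3 - 4 * F0 * F4 * k1 ^+ 2 * k2 ^+ 2
     + 4 * (F0 - F1 * F4) * k1 ^+ 2 * k2 * k3
     + (F3 ^+ 2 + 2 * F1 - 4 * F2 * F4) * k1 ^+ 2 * k3 ^+ 2
     - 4 * F0 * k1 * k2 ^+ 3 - 4 * F1 * k1 * k2 ^+ 2 * k3
     - 4 * F2 * k1 * k2 * k3 ^+ 2 - 2 * F3 * k1 * k3 ^+ 3 + k3 ^+ 4).

(* The Cassels--Flynn biquadratic forms B_ij (for f5 = 1, f6 = 0), in the    *)
(* normalisation B_ij(k, (0,0,0,1)) = k_i k_j; B11 is the classical          *)
(* (k1 l4 - k2 l3 + k3 l2 - k4 l1)^2.  Only B_ii and B_i4 are needed.        *)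
Definition B11 (f0 f1 f2 f3 f4 : int) (k1 k2 k3 k4 l1 l2 l3 l4 : R) : R :=
  let F0 : R := f0%:~R in let F1 : R := f1%:~R in let F2 : R := f2%:~R in
  let F3 : R := f3%:~R in let F4 : R := f4%:~R in
    k1 * k1 * l4 * l4
    - 2 * k1 * k2 * l3 * l4
    + 2 * k1 * k3 * l2 * l4
    - 2 * k1 * k4 * l1 * l4
    + k2 * k2 * l3 * l3
    - 2 * k2 * k3 * l2 * l3
    + 2 * k2 * k4 * l1 * l3
    + k3 * k3 * l2 * l2
    - 2 * k3 * k4 * l1 * l2
    + k4 * k4 * l1 * l1.

Definition B22 (f0 f1 f2 f3 f4 : int) (k1 k2 k3 k4 l1 l2 l3 l4 : R) : R :=
  let F0 : R := f0%:~R in let F1 : R := f1%:~R in let F2 : R := f2%:~R in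
  let F3 : R := f3%:~R in let F4 : R := f4%:~R in
    2 * F1 ^+ 2 * k1 * k1 * l1 * l1
    - 8 * F0 * F2 * k1 * k1 * l1 * l1
    - 4 * F0 * F3 * k1 * k1 * l1 * l2
    - 2 * F1 * F3 * k1 * k1 * l1 * l3
    - 4 * F0 * k1 * k1 * l1 * l4
    - 4 * F0 * F4 * k1 * k1 * l2 * l2
    - 4 * F1 * F4 * k1 * k1 * l2 * l3
    - 4 * F0 * k1 * k1 * l2 * l3
    - 2 * F1 * k1 * k1 * l2 * l4
    + F3 ^+ 2 * k1 * k1 * l3 * l3
    - 4 * F2 * F4 * k1 * k1 * l3 * l3
    - 2 * F1 * k1 * k1 * l3 * l3
    - 4 * F2 * k1 * k1 * l3 * l4
    - 4 * F0 * F3 * k1 * k2 * l1 * l1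
    + 8 * F0 * k1 * k2 * l1 * l3
    - 4 * F0 * k1 * k2 * l2 * l2
    - 4 * F1 * k1 * k2 * l2 * l3
    - 4 * F2 * k1 * k2 * l3 * l3
    - 2 * F3 * k1 * k2 * l3 * l4
    - 2 * F1 * F3 * k1 * k3 * l1 * l1
    + 8 * F0 * k1 * k3 * l1 * l2
    + 8 * F1 * k1 * k3 * l1 * l3
    + 2 * F3 * k1 * k3 * l2 * l4
    - 2 * F3 * k1 * k3 * l3 * l3
    - 4 * F0 * k1 * k4 * l1 * l1
    - 2 * F3 * k1 * k4 * l2 * l3
    - 4 * F4 * k1 * k4 * l3 * l3
    - 4 * k1 * k4 * l3 * l4
    - 4 * F0 * F4 * k2 * k2 * l1 * l1
    - 4 * F0 * k2 * k2 * l1 * l2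
    + k2 * k2 * l4 * l4
    - 4 * F1 * F4 * k2 * k3 * l1 * l1
    - 4 * F0 * k2 * k3 * l1 * l1
    - 4 * F1 * k2 * k3 * l1 * l2
    - 2 * F3 * k2 * k3 * l1 * l4
    - 2 * F1 * k2 * k4 * l1 * l1
    + 2 * F3 * k2 * k4 * l1 * l3
    - 2 * k2 * k4 * l3 * l3
    + F3 ^+ 2 * k3 * k3 * l1 * l1
    - 4 * F2 * F4 * k3 * k3 * l1 * l1
    - 2 * F1 * k3 * k3 * l1 * l1
    - 4 * F2 * k3 * k3 * l1 * l2
    - 2 * F3 * k3 * k3 * l1 * l3
    - 4 * F4 * k3 * k3 * l1 * l4
    - 2 * k3 * k3 * l2 * l4
    + 2 * k3 * k3 * l3 * l3
    - 4 * F2 * k3 * k4 * l1 * l1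
    - 2 * F3 * k3 * k4 * l1 * l2
    - 4 * k3 * k4 * l1 * l4
    + k4 * k4 * l2 * l2.

Definition B33 (f0 f1 f2 f3 f4 : int) (k1 k2 k3 k4 l1 l2 l3 l4 : R) : R :=
  let F0 : R := f0%:~R in let F1 : R := f1%:~R in let F2 : R := f2%:~R in
  let F3 : R := f3%:~R in let F4 : R := f4%:~R in
    F1 ^+ 2 * k1 * k1 * l2 * l2
    - 4 * F0 * F2 * k1 * k1 * l2 * l2
    - 4 * F0 * F3 * k1 * k1 * l2 * l3
    - 4 * F0 * F4 * k1 * k1 * l3 * l3
    - 4 * F0 * k1 * k1 * l3 * l4
    - 2 * F1 ^+ 2 * k1 * k2 * l1 * l2
    + 8 * F0 * F2 * k1 * k2 * l1 * l2
    + 4 * F0 * F3 * k1 * k2 * l1 * l3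
    + 4 * F0 * k1 * k2 * l2 * l4
    - 4 * F0 * k1 * k2 * l3 * l3
    + 4 * F0 * F3 * k1 * k3 * l1 * l2
    + 8 * F0 * F4 * k1 * k3 * l1 * l3
    + 4 * F0 * k1 * k3 * l1 * l4
    + 4 * F0 * k1 * k3 * l2 * l3
    + 2 * F1 * k1 * k3 * l2 * l4
    + 4 * F0 * k1 * k4 * l1 * l3
    - 4 * F0 * k1 * k4 * l2 * l2
    - 2 * F1 * k1 * k4 * l2 * l3
    + F1 ^+ 2 * k2 * k2 * l1 * l1
    - 4 * F0 * F2 * k2 * k2 * l1 * l1
    - 4 * F0 * k2 * k2 * l1 * l4
    - 4 * F0 * F3 * k2 * k3 * l1 * l1
    + 4 * F0 * k2 * k3 * l1 * l3
    - 2 * F1 * k2 * k3 * l1 * l4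
    + 4 * F0 * k2 * k4 * l1 * l2
    + 2 * F1 * k2 * k4 * l1 * l3
    - 4 * F0 * F4 * k3 * k3 * l1 * l1
    - 4 * F0 * k3 * k3 * l1 * l2
    + k3 * k3 * l4 * l4
    - 4 * F0 * k3 * k4 * l1 * l1
    - 2 * k3 * k4 * l3 * l4
    + k4 * k4 * l3 * l3.

Definition B44 (f0 f1 f2 f3 f4 : int) (k1 k2 k3 k4 l1 l2 l3 l4 : R) : R :=
  let F0 : R := f0%:~R in let F1 : R := f1%:~R in let F2 : R := f2%:~R in
  let F3 : R := f3%:~R in let F4 : R := f4%:~R in
    F1 ^+ 2 * F3 ^+ 2 * k1 * k1 * l1 * l1
    - 4 * F1 ^+ 2 * F2 * F4 * k1 * k1 * l1 * l1
    - 2 * F1 ^+ 3 * k1 * k1 * l1 * l1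
    - 4 * F0 * F2 * F3 ^+ 2 * k1 * k1 * l1 * l1
    + 16 * F0 * F2 ^+ 2 * F4 * k1 * k1 * l1 * l1
    - 8 * F0 * F1 * F3 * F4 * k1 * k1 * l1 * l1
    + 8 * F0 * F1 * F2 * k1 * k1 * l1 * l1
    + 16 * F0 ^+ 2 * F4 ^+ 2 * k1 * k1 * l1 * l1
    - 16 * F0 ^+ 2 * F3 * k1 * k1 * l1 * l1
    - 4 * F1 ^+ 2 * F2 * k1 * k1 * l1 * l2
    + 16 * F0 * F2 ^+ 2 * k1 * k1 * l1 * l2
    - 8 * F0 * F1 * F3 * k1 * k1 * l1 * l2
    + 16 * F0 ^+ 2 * F4 * k1 * k1 * l1 * l2
    - 2 * F1 ^+ 2 * F3 * k1 * k1 * l1 * l3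
    + 8 * F0 * F2 * F3 * k1 * k1 * l1 * l3
    + 16 * F0 ^+ 2 * k1 * k1 * l1 * l3
    - 4 * F1 ^+ 2 * F4 * k1 * k1 * l1 * l4
    - 4 * F0 * F3 ^+ 2 * k1 * k1 * l1 * l4
    + 16 * F0 * F2 * F4 * k1 * k1 * l1 * l4
    - 2 * F1 ^+ 2 * k1 * k1 * l2 * l4
    + 8 * F0 * F2 * k1 * k1 * l2 * l4
    + 2 * F1 ^+ 2 * k1 * k1 * l3 * l3
    - 8 * F0 * F2 * k1 * k1 * l3 * l3
    - 4 * F1 ^+ 2 * F2 * k1 * k2 * l1 * l1
    + 16 * F0 * F2 ^+ 2 * k1 * k2 * l1 * l1
    - 8 * F0 * F1 * F3 * k1 * k2 * l1 * l1
    + 16 * F0 ^+ 2 * F4 * k1 * k2 * l1 * l1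
    - 2 * F1 ^+ 2 * F3 * k1 * k2 * l1 * l2
    + 8 * F0 * F2 * F3 * k1 * k2 * l1 * l2
    + 16 * F0 ^+ 2 * k1 * k2 * l1 * l2
    + 4 * F0 * F3 ^+ 2 * k1 * k2 * l1 * l3
    + 8 * F0 * F1 * k1 * k2 * l1 * l3
    - 4 * F1 ^+ 2 * k1 * k2 * l1 * l4
    + 16 * F0 * F2 * k1 * k2 * l1 * l4
    + 4 * F0 * F3 * k1 * k2 * l2 * l4
    - 4 * F0 * F3 * k1 * k2 * l3 * l3
    - 2 * F1 ^+ 2 * F3 * k1 * k3 * l1 * l1
    + 8 * F0 * F2 * F3 * k1 * k3 * l1 * l1
    + 16 * F0 ^+ 2 * k1 * k3 * l1 * l1
    + 4 * F0 * F3 ^+ 2 * k1 * k3 * l1 * l2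
    + 8 * F0 * F1 * k1 * k3 * l1 * l2
    + 8 * F1 ^+ 2 * k1 * k3 * l1 * l3
    + 8 * F0 * F3 * F4 * k1 * k3 * l1 * l3
    - 16 * F0 * F2 * k1 * k3 * l1 * l3
    + 8 * F0 * F3 * k1 * k3 * l1 * l4
    + 2 * F1 * F3 * k1 * k3 * l2 * l4
    - 2 * F1 * F3 * k1 * k3 * l3 * l3
    - 4 * F1 ^+ 2 * F4 * k1 * k4 * l1 * l1
    - 4 * F0 * F3 ^+ 2 * k1 * k4 * l1 * l1
    + 16 * F0 * F2 * F4 * k1 * k4 * l1 * l1
    - 4 * F1 ^+ 2 * k1 * k4 * l1 * l2
    + 16 * F0 * F2 * k1 * k4 * l1 * l2
    + 8 * F0 * F3 * k1 * k4 * l1 * l3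
    - 2 * F1 * F3 * k1 * k4 * l1 * l4
    + 8 * F0 * F4 * k1 * k4 * l1 * l4
    + 4 * F0 * k1 * k4 * l2 * l4
    - 4 * F0 * k1 * k4 * l3 * l3
    + F1 ^+ 2 * k2 * k2 * l2 * l2
    - 4 * F0 * F2 * k2 * k2 * l2 * l2
    - 4 * F0 * F3 * k2 * k2 * l2 * l3
    - 4 * F0 * F4 * k2 * k2 * l3 * l3
    - 4 * F0 * k2 * k2 * l3 * l4
    - 4 * F0 * F3 * k2 * k3 * l2 * l2
    - 2 * F1 * F3 * k2 * k3 * l2 * l3
    - 8 * F0 * F4 * k2 * k3 * l2 * l3
    - 4 * F0 * k2 * k3 * l2 * l4
    - 4 * F1 * F4 * k2 * k3 * l3 * l3
    - 4 * F0 * k2 * k3 * l3 * l3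
    - 4 * F1 * k2 * k3 * l3 * l4
    - 2 * F1 ^+ 2 * k2 * k4 * l1 * l1
    + 8 * F0 * F2 * k2 * k4 * l1 * l1
    + 4 * F0 * F3 * k2 * k4 * l1 * l2
    + 2 * F1 * F3 * k2 * k4 * l1 * l3
    + 4 * F0 * k2 * k4 * l1 * l4
    - 4 * F0 * k2 * k4 * l2 * l3
    - 2 * F1 * k2 * k4 * l3 * l3
    + 2 * F1 ^+ 2 * k3 * k3 * l1 * l1
    - 8 * F0 * F2 * k3 * k3 * l1 * l1
    - 4 * F0 * F3 * k3 * k3 * l1 * l2
    - 2 * F1 * F3 * k3 * k3 * l1 * l3
    - 4 * F0 * k3 * k3 * l1 * l4
    - 4 * F0 * F4 * k3 * k3 * l2 * l2
    - 4 * F1 * F4 * k3 * k3 * l2 * l3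
    - 4 * F0 * k3 * k3 * l2 * l3
    - 2 * F1 * k3 * k3 * l2 * l4
    + F3 ^+ 2 * k3 * k3 * l3 * l3
    - 4 * F2 * F4 * k3 * k3 * l3 * l3
    - 2 * F1 * k3 * k3 * l3 * l3
    - 4 * F2 * k3 * k3 * l3 * l4
    - 4 * F0 * k3 * k4 * l2 * l2
    - 4 * F1 * k3 * k4 * l2 * l3
    - 4 * F2 * k3 * k4 * l3 * l3
    - 2 * F3 * k3 * k4 * l3 * l4
    + k4 * k4 * l4 * l4.

Definition B14 (f0 f1 f2 f3 f4 : int) (k1 k2 k3 k4 l1 l2 l3 l4 : R) : R :=
  let F0 : R := f0%:~R in let F1 : R := f1%:~R in let F2 : R := f2%:~R in
  let F3 : R := f3%:~R in let F4 : R := f4%:~R in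
    2 * F1 ^+ 2 * F4 * k1 * k1 * l1 * l1
    + 2 * F0 * F3 ^+ 2 * k1 * k1 * l1 * l1
    - 8 * F0 * F2 * F4 * k1 * k1 * l1 * l1
    + 2 * F1 ^+ 2 * k1 * k1 * l1 * l2
    - 8 * F0 * F2 * k1 * k1 * l1 * l2
    - 4 * F0 * F3 * k1 * k1 * l1 * l3
    + F1 * F3 * k1 * k1 * l1 * l4
    - 4 * F0 * F4 * k1 * k1 * l1 * l4
    - 2 * F0 * k1 * k1 * l2 * l4
    + 2 * F0 * k1 * k1 * l3 * l3
    + 2 * F1 ^+ 2 * k1 * k2 * l1 * l1
    - 8 * F0 * F2 * k1 * k2 * l1 * l1
    - 4 * F0 * F3 * k1 * k2 * l1 * l2
    - F1 * F3 * k1 * k2 * l1 * l3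
    - 4 * F0 * F4 * k1 * k2 * l1 * l3
    - 6 * F0 * k1 * k2 * l1 * l4
    - 2 * F0 * k1 * k2 * l2 * l3
    - F1 * k1 * k2 * l2 * l4
    - 4 * F0 * F3 * k1 * k3 * l1 * l1
    - F1 * F3 * k1 * k3 * l1 * l2
    - 4 * F0 * F4 * k1 * k3 * l1 * l2
    - 4 * F1 * F4 * k1 * k3 * l1 * l3
    + 4 * F0 * k1 * k3 * l1 * l3
    - 2 * F1 * k1 * k3 * l1 * l4
    - 2 * F0 * k1 * k3 * l2 * l2
    - 2 * F1 * k1 * k3 * l2 * l3
    - 2 * F2 * k1 * k3 * l2 * l4
    - F3 * k1 * k3 * l3 * l4
    + F1 * F3 * k1 * k4 * l1 * l1
    - 4 * F0 * F4 * k1 * k4 * l1 * l1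
    - 6 * F0 * k1 * k4 * l1 * l2
    - 2 * F1 * k1 * k4 * l1 * l3
    + 2 * F2 * k1 * k4 * l1 * l4
    + k1 * k4 * l4 * l4
    - 2 * F0 * k2 * k2 * l1 * l3
    + 2 * F0 * k2 * k2 * l2 * l2
    + F1 * k2 * k2 * l2 * l3
    - 2 * F0 * k2 * k3 * l1 * l2
    - 2 * F1 * k2 * k3 * l1 * l3
    + F1 * k2 * k3 * l2 * l2
    + 2 * F2 * k2 * k3 * l2 * l3
    + F3 * k2 * k3 * l3 * l3
    - 2 * F0 * k2 * k4 * l1 * l1
    - F1 * k2 * k4 * l1 * l2
    - 2 * F2 * k2 * k4 * l1 * l3
    - k2 * k4 * l3 * l4
    + 2 * F0 * k3 * k3 * l1 * l1
    + F3 * k3 * k3 * l2 * l3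
    + 2 * F4 * k3 * k3 * l3 * l3
    + 2 * k3 * k3 * l3 * l4
    - F3 * k3 * k4 * l1 * l3
    - k3 * k4 * l2 * l4
    + 2 * k3 * k4 * l3 * l3
    + k4 * k4 * l1 * l4.

Definition B24 (f0 f1 f2 f3 f4 : int) (k1 k2 k3 k4 l1 l2 l3 l4 : R) : R :=
  let F0 : R := f0%:~R in let F1 : R := f1%:~R in let F2 : R := f2%:~R in
  let F3 : R := f3%:~R in let F4 : R := f4%:~R in
    - F1 ^+ 2 * F3 * k1 * k1 * l1 * l1
    + 4 * F0 * F2 * F3 * k1 * k1 * l1 * l1
    + 8 * F0 ^+ 2 * k1 * k1 * l1 * l1
    + 2 * F0 * F3 ^+ 2 * k1 * k1 * l1 * l2
    + 4 * F0 * F1 * k1 * k1 * l1 * l2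
    + 4 * F1 ^+ 2 * k1 * k1 * l1 * l3
    + 4 * F0 * F3 * F4 * k1 * k1 * l1 * l3
    - 8 * F0 * F2 * k1 * k1 * l1 * l3
    + 4 * F0 * F3 * k1 * k1 * l1 * l4
    + F1 * F3 * k1 * k1 * l2 * l4
    - F1 * F3 * k1 * k1 * l3 * l3
    + 2 * F0 * F3 ^+ 2 * k1 * k2 * l1 * l1
    + 4 * F0 * F1 * k1 * k2 * l1 * l1
    + 2 * F1 ^+ 2 * k1 * k2 * l1 * l2
    + 4 * F0 * F3 * F4 * k1 * k2 * l1 * l2
    + 4 * F1 * F2 * k1 * k2 * l1 * l3
    + 8 * F0 * F4 ^+ 2 * k1 * k2 * l1 * l3
    - 8 * F0 * F3 * k1 * k2 * l1 * l3
    + F1 * F3 * k1 * k2 * l1 * l4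
    + 4 * F0 * F4 * k1 * k2 * l1 * l4
    + 2 * F0 * F3 * k1 * k2 * l2 * l2
    + F1 * F3 * k1 * k2 * l2 * l3
    + 4 * F0 * F4 * k1 * k2 * l2 * l3
    + 2 * F1 * F4 * k1 * k2 * l2 * l4
    + 4 * F0 * k1 * k2 * l3 * l3
    + 2 * F1 * k1 * k2 * l3 * l4
    + 4 * F1 ^+ 2 * k1 * k3 * l1 * l1
    + 4 * F0 * F3 * F4 * k1 * k3 * l1 * l1
    - 8 * F0 * F2 * k1 * k3 * l1 * l1
    + 4 * F1 * F2 * k1 * k3 * l1 * l2
    + 8 * F0 * F4 ^+ 2 * k1 * k3 * l1 * l2
    - 8 * F0 * F3 * k1 * k3 * l1 * l2
    + F3 ^+ 3 * k1 * k3 * l1 * l3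
    - 4 * F2 * F3 * F4 * k1 * k3 * l1 * l3
    + 8 * F2 ^+ 2 * k1 * k3 * l1 * l3
    + 8 * F1 * F4 ^+ 2 * k1 * k3 * l1 * l3
    - 8 * F1 * F3 * k1 * k3 * l1 * l3
    + 4 * F1 * F4 * k1 * k3 * l1 * l4
    - 4 * F0 * k1 * k3 * l1 * l4
    + 4 * F0 * F4 * k1 * k3 * l2 * l2
    + 4 * F1 * F4 * k1 * k3 * l2 * l3
    + 4 * F0 * k1 * k3 * l2 * l3
    - F3 ^+ 2 * k1 * k3 * l2 * l4
    + 4 * F2 * F4 * k1 * k3 * l2 * l4
    + 4 * F1 * k1 * k3 * l3 * l3
    + 4 * F2 * k1 * k3 * l3 * l4
    + 4 * F0 * F3 * k1 * k4 * l1 * l1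
    + F1 * F3 * k1 * k4 * l1 * l2
    + 4 * F0 * F4 * k1 * k4 * l1 * l2
    + 4 * F1 * F4 * k1 * k4 * l1 * l3
    - 4 * F0 * k1 * k4 * l1 * l3
    + 2 * F1 * k1 * k4 * l1 * l4
    + 2 * F0 * k1 * k4 * l2 * l2
    + 2 * F1 * k1 * k4 * l2 * l3
    + 2 * F2 * k1 * k4 * l2 * l4
    + F3 * k1 * k4 * l3 * l4
    + 2 * F0 * F3 * k2 * k2 * l1 * l2
    + 4 * F0 * F4 * k2 * k2 * l1 * l3
    + 2 * F0 * k2 * k2 * l1 * l4
    + 2 * F0 * k2 * k2 * l2 * l3
    + F1 * k2 * k2 * l2 * l4
    + F1 * F3 * k2 * k3 * l1 * l2
    + 4 * F0 * F4 * k2 * k3 * l1 * l2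
    + 4 * F1 * F4 * k2 * k3 * l1 * l3
    + 4 * F0 * k2 * k3 * l1 * l3
    + 2 * F1 * k2 * k3 * l1 * l4
    + 2 * F0 * k2 * k3 * l2 * l2
    + 2 * F1 * k2 * k3 * l2 * l3
    + 2 * F2 * k2 * k3 * l2 * l4
    + F3 * k2 * k3 * l3 * l4
    + F1 * F3 * k2 * k4 * l1 * l1
    + 2 * F1 * F4 * k2 * k4 * l1 * l2
    - F3 ^+ 2 * k2 * k4 * l1 * l3
    + 4 * F2 * F4 * k2 * k4 * l1 * l3
    + 2 * F2 * k2 * k4 * l1 * l4
    + F1 * k2 * k4 * l2 * l2
    + 2 * F2 * k2 * k4 * l2 * l3
    + F3 * k2 * k4 * l2 * l4
    + F3 * k2 * k4 * l3 * l3
    + 2 * F4 * k2 * k4 * l3 * l4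
    + k2 * k4 * l4 * l4
    - F1 * F3 * k3 * k3 * l1 * l1
    + 4 * F0 * k3 * k3 * l1 * l2
    + 4 * F1 * k3 * k3 * l1 * l3
    + F3 * k3 * k3 * l2 * l4
    - F3 * k3 * k3 * l3 * l3
    + 2 * F1 * k3 * k4 * l1 * l2
    + 4 * F2 * k3 * k4 * l1 * l3
    + F3 * k3 * k4 * l1 * l4
    + F3 * k3 * k4 * l2 * l3
    + 2 * F4 * k3 * k4 * l2 * l4
    + 2 * k3 * k4 * l3 * l4
    + k4 * k4 * l2 * l4.

Definition B34 (f0 f1 f2 f3 f4 : int) (k1 k2 k3 k4 l1 l2 l3 l4 : R) : R :=
  let F0 : R := f0%:~R in let F1 : R := f1%:~R in let F2 : R := f2%:~R in
  let F3 : R := f3%:~R in let F4 : R := f4%:~R in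
    2 * F1 ^+ 2 * F2 * k1 * k1 * l1 * l1
    - 8 * F0 * F2 ^+ 2 * k1 * k1 * l1 * l1
    + 4 * F0 * F1 * F3 * k1 * k1 * l1 * l1
    - 8 * F0 ^+ 2 * F4 * k1 * k1 * l1 * l1
    + F1 ^+ 2 * F3 * k1 * k1 * l1 * l2
    - 4 * F0 * F2 * F3 * k1 * k1 * l1 * l2
    - 8 * F0 ^+ 2 * k1 * k1 * l1 * l2
    - 2 * F0 * F3 ^+ 2 * k1 * k1 * l1 * l3
    - 4 * F0 * F1 * k1 * k1 * l1 * l3
    + 2 * F1 ^+ 2 * k1 * k1 * l1 * l4
    - 8 * F0 * F2 * k1 * k1 * l1 * l4
    - 2 * F0 * F3 * k1 * k1 * l2 * l4
    + 2 * F0 * F3 * k1 * k1 * l3 * l3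
    + F1 ^+ 2 * F3 * k1 * k2 * l1 * l1
    - 4 * F0 * F2 * F3 * k1 * k2 * l1 * l1
    - 8 * F0 ^+ 2 * k1 * k2 * l1 * l1
    + 2 * F1 ^+ 2 * F4 * k1 * k2 * l1 * l2
    - 8 * F0 * F2 * F4 * k1 * k2 * l1 * l2
    - 4 * F0 * F1 * k1 * k2 * l1 * l2
    - 2 * F1 ^+ 2 * k1 * k2 * l1 * l3
    - 4 * F0 * F3 * F4 * k1 * k2 * l1 * l3
    - 4 * F0 * F3 * k1 * k2 * l1 * l4
    + F1 ^+ 2 * k1 * k2 * l2 * l2
    - 4 * F0 * F2 * k1 * k2 * l2 * l2
    - 4 * F0 * F3 * k1 * k2 * l2 * l3
    - 4 * F0 * F4 * k1 * k2 * l2 * l4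
    - 4 * F0 * k1 * k2 * l3 * l4
    - 2 * F0 * F3 ^+ 2 * k1 * k3 * l1 * l1
    - 4 * F0 * F1 * k1 * k3 * l1 * l1
    - 2 * F1 ^+ 2 * k1 * k3 * l1 * l2
    - 4 * F0 * F3 * F4 * k1 * k3 * l1 * l2
    - 4 * F1 * F2 * k1 * k3 * l1 * l3
    - 8 * F0 * F4 ^+ 2 * k1 * k3 * l1 * l3
    + 8 * F0 * F3 * k1 * k3 * l1 * l3
    - F1 * F3 * k1 * k3 * l1 * l4
    - 4 * F0 * F4 * k1 * k3 * l1 * l4
    - 2 * F0 * F3 * k1 * k3 * l2 * l2
    - F1 * F3 * k1 * k3 * l2 * l3
    - 4 * F0 * F4 * k1 * k3 * l2 * l3
    - 2 * F1 * F4 * k1 * k3 * l2 * l4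
    - 4 * F0 * k1 * k3 * l3 * l3
    - 2 * F1 * k1 * k3 * l3 * l4
    + 2 * F1 ^+ 2 * k1 * k4 * l1 * l1
    - 8 * F0 * F2 * k1 * k4 * l1 * l1
    - 4 * F0 * F3 * k1 * k4 * l1 * l2
    - F1 * F3 * k1 * k4 * l1 * l3
    - 4 * F0 * F4 * k1 * k4 * l1 * l3
    - 6 * F0 * k1 * k4 * l1 * l4
    - 2 * F0 * k1 * k4 * l2 * l3
    - F1 * k1 * k4 * l2 * l4
    + F1 ^+ 2 * k2 * k2 * l1 * l2
    - 4 * F0 * F2 * k2 * k2 * l1 * l2
    - 2 * F0 * F3 * k2 * k2 * l1 * l3
    - 2 * F0 * k2 * k2 * l2 * l4
    + 2 * F0 * k2 * k2 * l3 * l3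
    - 4 * F0 * F3 * k2 * k3 * l1 * l2
    - F1 * F3 * k2 * k3 * l1 * l3
    - 4 * F0 * F4 * k2 * k3 * l1 * l3
    - 2 * F0 * k2 * k3 * l1 * l4
    + 2 * F0 * k2 * k3 * l2 * l3
    - F1 * k2 * k3 * l2 * l4
    + 2 * F1 * k2 * k3 * l3 * l3
    - 2 * F0 * F3 * k2 * k4 * l1 * l1
    - 4 * F0 * F4 * k2 * k4 * l1 * l2
    - 2 * F1 * F4 * k2 * k4 * l1 * l3
    - F1 * k2 * k4 * l1 * l4
    - 2 * F0 * k2 * k4 * l2 * l2
    - F1 * k2 * k4 * l2 * l3
    + 2 * F0 * F3 * k3 * k3 * l1 * l1
    - 4 * F0 * k3 * k3 * l1 * l3
    + 2 * F0 * k3 * k3 * l2 * l2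
    + 2 * F1 * k3 * k3 * l2 * l3
    + 2 * F2 * k3 * k3 * l3 * l3
    + F3 * k3 * k3 * l3 * l4
    - 4 * F0 * k3 * k4 * l1 * l2
    - 2 * F1 * k3 * k4 * l1 * l3
    + F3 * k3 * k4 * l3 * l3
    + 2 * F4 * k3 * k4 * l3 * l4
    + k3 * k4 * l4 * l4
    + k4 * k4 * l3 * l4.

End Forms.

Arguments Kummer {R}.
Arguments B11 {R}. Arguments B22 {R}. Arguments B33 {R}. Arguments B44 {R}.
Arguments B14 {R}. Arguments B24 {R}. Arguments B34 {R}.

(* Vectors of length 4 are functions 'I_4 -> R; index i : 'I_4 stands for  *)
(* the paper's index i+1.                                                   *)
Definition c4 {R : comNzRingType} (x : 'I_4 -> R) (n : nat) : R := x (inord n).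

Definition Bdiag {R : comNzRingType} (f0 f1 f2 f3 f4 : int) (i : 'I_4)
  (x y : 'I_4 -> R) : R :=
  let B := match nat_of_ord i with
           | 0 => B11 | 1 => B22 | 2 => B33 | _ => B44 end in
  B f0 f1 f2 f3 f4 (c4 x 0) (c4 x 1) (c4 x 2) (c4 x 3)
                   (c4 y 0) (c4 y 1) (c4 y 2) (c4 y 3).

(* Duplication quartics: delta_i(k) = 2 B_i4(k,k) (i=1,2,3),               *)
(* delta_4(k) = B_44(k,k).  This is a duplication map on the Kummer surface *)
(* with delta(0,0,0,1) = (0,0,0,1); Flynn's delta agrees with it modulo the *)
(* Kummer equation, which is all that matters below.         *)
Definition delta {R : comNzRingType} (f0 f1 f2 f3 f4 : int) (i : 'I_4)
  (x : 'I_4 -> R) : R :=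
  match nat_of_ord i with
  | 0 => 2 * B14 f0 f1 f2 f3 f4 (c4 x 0) (c4 x 1) (c4 x 2) (c4 x 3)
                                (c4 x 0) (c4 x 1) (c4 x 2) (c4 x 3)
  | 1 => 2 * B24 f0 f1 f2 f3 f4 (c4 x 0) (c4 x 1) (c4 x 2) (c4 x 3)
                                (c4 x 0) (c4 x 1) (c4 x 2) (c4 x 3)
  | 2 => 2 * B34 f0 f1 f2 f3 f4 (c4 x 0) (c4 x 1) (c4 x 2) (c4 x 3)
                                (c4 x 0) (c4 x 1) (c4 x 2) (c4 x 3)
  | _ => B44 f0 f1 f2 f3 f4 (c4 x 0) (c4 x 1) (c4 x 2) (c4 x 3)
                            (c4 x 0) (c4 x 1) (c4 x 2) (c4 x 3)
  end.

(* The polynomial ring Z[k1,k2,k3,k4] = {mpoly int[4]}, k_{i+1} = 'X_i.      *)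
Notation ZK := {mpoly int[4]}.

Definition kvar (n : nat) : ZK := 'X_(inord n).

Definition KummerZ (f0 f1 f2 f3 f4 : int) : ZK :=
  Kummer f0 f1 f2 f3 f4 (kvar 0) (kvar 1) (kvar 2) (kvar 3).

Definition congK (f0 f1 f2 f3 f4 : int) (p q : ZK) : Prop :=
  exists g : ZK, p - q = g * KummerZ f0 f1 f2 f3 f4.

(* Uchida's polynomials: mu m i is mu_{m,i+1}.  The recursive relations are *)
(* imposed modulo the Kummer equation.              *)
Definition uchida_seq (f0 f1 f2 f3 f4 : int) (mu : nat -> 'I_4 -> ZK) : Prop :=
  [/\ forall i : 'I_4, mu 0%N i = (if nat_of_ord i == 3%N then 1 else 0),
      forall i : 'I_4, mu 1%N i = 'X_i,
      forall (m : nat) (i : 'I_4), (1 <= m)%N ->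
        congK f0 f1 f2 f3 f4 (mu m.*2 i) (delta f0 f1 f2 f3 f4 i (mu m))
    & forall (m : nat) (i : 'I_4), (1 <= m)%N ->
        congK f0 f1 f2 f3 f4 (mu m.*2.+1 i * 'X_i)
              (Bdiag f0 f1 f2 f3 f4 i (mu m.+1) (mu m))].

Definition in_I (p : ZK) : Prop :=
  exists a : 'I_3 -> ZK, p = \sum_(j < 3) a j * kvar j.

Definition in_I2 (p : ZK) : Prop :=
  exists a : 'I_3 -> 'I_3 -> ZK,
    p = \sum_(j < 3) \sum_(l < 3) a j l * (kvar j * kvar l).

(* Let I = (k1,k2,k3), the ideal of the identity [0:0:0:1] of the Kummer
   surface.  The Kummer quartic and the forms B_11(k,l), B_22, B_33 are
   combinations of products of two of k1,k2,k3,l1,l2,l3, the forms B_i4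
   (hence delta_1..3) of products of one of them, and
   B_44(k,l) = k4^2 l4^2 modulo such products.  As Uchida's relations hold
   modulo the Kummer quartic, hence modulo I^2, the congruence
   mu_m = (0,0,0,k4^(m^2)) mod (I,I,I,I^2) passes from mu_m to mu_2m, since
   (k4^(m^2))^4 = k4^((2m)^2), and from mu_m, mu_(m+1) to mu_(2m+1), since
   k_i mu_(2m+1,i) lies in I^2 (i <= 3), resp. in
   k4^(2(m+1)^2 + 2m^2) + I^2 = k4 k4^((2m+1)^2) + I^2, and cancelling a
   variable lowers the I-adic order of a polynomial by at most one. *)
From HB Require Import structures.
From mathcomp Require Import all_boot all_order all_algebra.
From mathcomp.multinomials Require Import mpoly.
From mathcomp Require Import ring zify.

Set Implicit Arguments.
Unset Strict Implicit.
Unset Printing Implicit Defensive.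

Import Order.TTheory GRing.Theory Num.Theory.
Local Open Scope ring_scope.

Section Decompositions.
Variable R : comNzRingType.
Variables (f0 f1 f2 f3 f4 : int) (k1 k2 k3 k4 l1 l2 l3 l4 : R).
Local Notation F0 := (f0%:~R : R).
Local Notation F1 := (f1%:~R : R).
Local Notation F2 := (f2%:~R : R).
Local Notation F3 := (f3%:~R : R).
Local Notation F4 := (f4%:~R : R).

Lemma B11_decomp :
  B11 f0 f1 f2 f3 f4 k1 k2 k3 k4 l1 l2 l3 l4 =
  k1 * k1 * (l4 * l4)
  + k1 * k2 * ((-2) * l3 * l4)
  + k1 * k3 * (2 * l2 * l4)
  + k1 * l1 * ((-2) * k4 * l4)
  + k2 * k2 * (l3 * l3)
  + k2 * k3 * ((-2) * l2 * l3)
  + k2 * l1 * (2 * k4 * l3)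
  + k3 * k3 * (l2 * l2)
  + k3 * l1 * ((-2) * k4 * l2)
  + l1 * l1 * (k4 * k4).
Proof. rewrite /B11 /=; ring. Qed.

Lemma B22_decomp :
  B22 f0 f1 f2 f3 f4 k1 k2 k3 k4 l1 l2 l3 l4 =
  k1 * k1 * (2 * F1 * F1 * l1 * l1 + (-8) * F0 * F2 * l1 * l1
      + (-4) * F0 * F3 * l1 * l2 + (-2) * F1 * F3 * l1 * l3
      + (-4) * F0 * l1 * l4 + (-4) * F0 * F4 * l2 * l2
      + (-4) * F1 * F4 * l2 * l3 + (-4) * F0 * l2 * l3 + (-2) * F1 * l2 * l4
      + F3 * F3 * l3 * l3 + (-4) * F2 * F4 * l3 * l3 + (-2) * F1 * l3 * l3
      + (-4) * F2 * l3 * l4)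
  + k1 * k2 * ((-4) * F0 * F3 * l1 * l1 + 8 * F0 * l1 * l3
      + (-4) * F0 * l2 * l2 + (-4) * F1 * l2 * l3 + (-4) * F2 * l3 * l3
      + (-2) * F3 * l3 * l4)
  + k1 * k3 * ((-2) * F1 * F3 * l1 * l1 + 8 * F0 * l1 * l2 + 8 * F1 * l1 * l3
      + 2 * F3 * l2 * l4 + (-2) * F3 * l3 * l3)
  + k1 * l1 * ((-4) * F0 * k4 * l1)
  + k1 * l2 * ((-2) * F3 * k4 * l3)
  + k1 * l3 * ((-4) * F4 * k4 * l3 + (-4) * k4 * l4)
  + k2 * k2 * ((-4) * F0 * F4 * l1 * l1 + (-4) * F0 * l1 * l2 + l4 * l4)
  + k2 * k3 * ((-4) * F1 * F4 * l1 * l1 + (-4) * F0 * l1 * l1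
      + (-4) * F1 * l1 * l2 + (-2) * F3 * l1 * l4)
  + k2 * l1 * ((-2) * F1 * k4 * l1 + 2 * F3 * k4 * l3)
  + k2 * l3 * ((-2) * k4 * l3)
  + k3 * k3 * (F3 * F3 * l1 * l1 + (-4) * F2 * F4 * l1 * l1
      + (-2) * F1 * l1 * l1 + (-4) * F2 * l1 * l2 + (-2) * F3 * l1 * l3
      + (-4) * F4 * l1 * l4 + (-2) * l2 * l4 + 2 * l3 * l3)
  + k3 * l1 * ((-4) * F2 * k4 * l1 + (-2) * F3 * k4 * l2 + (-4) * k4 * l4)
  + l2 * l2 * (k4 * k4).
Proof. rewrite /B22 /=; ring. Qed.

Lemma B33_decomp :
  B33 f0 f1 f2 f3 f4 k1 k2 k3 k4 l1 l2 l3 l4 =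
  k1 * k1 * (F1 * F1 * l2 * l2 + (-4) * F0 * F2 * l2 * l2
      + (-4) * F0 * F3 * l2 * l3 + (-4) * F0 * F4 * l3 * l3
      + (-4) * F0 * l3 * l4)
  + k1 * k2 * ((-2) * F1 * F1 * l1 * l2 + 8 * F0 * F2 * l1 * l2
      + 4 * F0 * F3 * l1 * l3 + 4 * F0 * l2 * l4 + (-4) * F0 * l3 * l3)
  + k1 * k3 * (4 * F0 * F3 * l1 * l2 + 8 * F0 * F4 * l1 * l3
      + 4 * F0 * l1 * l4 + 4 * F0 * l2 * l3 + 2 * F1 * l2 * l4)
  + k1 * l1 * (4 * F0 * k4 * l3)
  + k1 * l2 * ((-4) * F0 * k4 * l2 + (-2) * F1 * k4 * l3)
  + k2 * k2 * (F1 * F1 * l1 * l1 + (-4) * F0 * F2 * l1 * l1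
      + (-4) * F0 * l1 * l4)
  + k2 * k3 * ((-4) * F0 * F3 * l1 * l1 + 4 * F0 * l1 * l3
      + (-2) * F1 * l1 * l4)
  + k2 * l1 * (4 * F0 * k4 * l2 + 2 * F1 * k4 * l3)
  + k3 * k3 * ((-4) * F0 * F4 * l1 * l1 + (-4) * F0 * l1 * l2 + l4 * l4)
  + k3 * l1 * ((-4) * F0 * k4 * l1)
  + k3 * l3 * ((-2) * k4 * l4)
  + l3 * l3 * (k4 * k4).
Proof. rewrite /B33 /=; ring. Qed.

Lemma B44_decomp :
  B44 f0 f1 f2 f3 f4 k1 k2 k3 k4 l1 l2 l3 l4 =
  k4 * k4 * l4 * l4 + (k1 * k1 * (F1 * F1 * F3 * F3 * l1 * l1
      + (-4) * F1 * F1 * F2 * F4 * l1 * l1 + (-2) * F1 * F1 * F1 * l1 * l1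
      + (-4) * F0 * F2 * F3 * F3 * l1 * l1 + 16 * F0 * F2 * F2 * F4 * l1 * l1
      + (-8) * F0 * F1 * F3 * F4 * l1 * l1 + 8 * F0 * F1 * F2 * l1 * l1
      + 16 * F0 * F0 * F4 * F4 * l1 * l1 + (-16) * F0 * F0 * F3 * l1 * l1
      + (-4) * F1 * F1 * F2 * l1 * l2 + 16 * F0 * F2 * F2 * l1 * l2
      + (-8) * F0 * F1 * F3 * l1 * l2 + 16 * F0 * F0 * F4 * l1 * l2
      + (-2) * F1 * F1 * F3 * l1 * l3 + 8 * F0 * F2 * F3 * l1 * l3
      + 16 * F0 * F0 * l1 * l3 + (-4) * F1 * F1 * F4 * l1 * l4
      + (-4) * F0 * F3 * F3 * l1 * l4 + 16 * F0 * F2 * F4 * l1 * l4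
      + (-2) * F1 * F1 * l2 * l4 + 8 * F0 * F2 * l2 * l4
      + 2 * F1 * F1 * l3 * l3 + (-8) * F0 * F2 * l3 * l3)
  + k1 * k2 * ((-4) * F1 * F1 * F2 * l1 * l1 + 16 * F0 * F2 * F2 * l1 * l1
      + (-8) * F0 * F1 * F3 * l1 * l1 + 16 * F0 * F0 * F4 * l1 * l1
      + (-2) * F1 * F1 * F3 * l1 * l2 + 8 * F0 * F2 * F3 * l1 * l2
      + 16 * F0 * F0 * l1 * l2 + 4 * F0 * F3 * F3 * l1 * l3
      + 8 * F0 * F1 * l1 * l3 + (-4) * F1 * F1 * l1 * l4
      + 16 * F0 * F2 * l1 * l4 + 4 * F0 * F3 * l2 * l4
      + (-4) * F0 * F3 * l3 * l3)
  + k1 * k3 * ((-2) * F1 * F1 * F3 * l1 * l1 + 8 * F0 * F2 * F3 * l1 * l1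
      + 16 * F0 * F0 * l1 * l1 + 4 * F0 * F3 * F3 * l1 * l2
      + 8 * F0 * F1 * l1 * l2 + 8 * F1 * F1 * l1 * l3
      + 8 * F0 * F3 * F4 * l1 * l3 + (-16) * F0 * F2 * l1 * l3
      + 8 * F0 * F3 * l1 * l4 + 2 * F1 * F3 * l2 * l4
      + (-2) * F1 * F3 * l3 * l3)
  + k1 * l1 * ((-4) * F1 * F1 * F4 * k4 * l1 + (-4) * F0 * F3 * F3 * k4 * l1
      + 16 * F0 * F2 * F4 * k4 * l1 + (-4) * F1 * F1 * k4 * l2
      + 16 * F0 * F2 * k4 * l2 + 8 * F0 * F3 * k4 * l3
      + (-2) * F1 * F3 * k4 * l4 + 8 * F0 * F4 * k4 * l4)
  + k1 * l2 * (4 * F0 * k4 * l4)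
  + k1 * l3 * ((-4) * F0 * k4 * l3)
  + k2 * k2 * (F1 * F1 * l2 * l2 + (-4) * F0 * F2 * l2 * l2
      + (-4) * F0 * F3 * l2 * l3 + (-4) * F0 * F4 * l3 * l3
      + (-4) * F0 * l3 * l4)
  + k2 * k3 * ((-4) * F0 * F3 * l2 * l2 + (-2) * F1 * F3 * l2 * l3
      + (-8) * F0 * F4 * l2 * l3 + (-4) * F0 * l2 * l4
      + (-4) * F1 * F4 * l3 * l3 + (-4) * F0 * l3 * l3 + (-4) * F1 * l3 * l4)
  + k2 * l1 * ((-2) * F1 * F1 * k4 * l1 + 8 * F0 * F2 * k4 * l1
      + 4 * F0 * F3 * k4 * l2 + 2 * F1 * F3 * k4 * l3 + 4 * F0 * k4 * l4)
  + k2 * l2 * ((-4) * F0 * k4 * l3)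
  + k2 * l3 * ((-2) * F1 * k4 * l3)
  + k3 * k3 * (2 * F1 * F1 * l1 * l1 + (-8) * F0 * F2 * l1 * l1
      + (-4) * F0 * F3 * l1 * l2 + (-2) * F1 * F3 * l1 * l3
      + (-4) * F0 * l1 * l4 + (-4) * F0 * F4 * l2 * l2
      + (-4) * F1 * F4 * l2 * l3 + (-4) * F0 * l2 * l3 + (-2) * F1 * l2 * l4
      + F3 * F3 * l3 * l3 + (-4) * F2 * F4 * l3 * l3 + (-2) * F1 * l3 * l3
      + (-4) * F2 * l3 * l4)
  + k3 * l2 * ((-4) * F0 * k4 * l2 + (-4) * F1 * k4 * l3)
  + k3 * l3 * ((-4) * F2 * k4 * l3 + (-2) * F3 * k4 * l4)).
Proof. rewrite /B44 /=; ring. Qed.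

Lemma B14_decomp :
  B14 f0 f1 f2 f3 f4 k1 k2 k3 k4 l1 l2 l3 l4 =
  k1 * (2 * F1 * F1 * F4 * k1 * l1 * l1 + 2 * F0 * F3 * F3 * k1 * l1 * l1
      + (-8) * F0 * F2 * F4 * k1 * l1 * l1 + 2 * F1 * F1 * k1 * l1 * l2
      + (-8) * F0 * F2 * k1 * l1 * l2 + (-4) * F0 * F3 * k1 * l1 * l3
      + F1 * F3 * k1 * l1 * l4 + (-4) * F0 * F4 * k1 * l1 * l4
      + (-2) * F0 * k1 * l2 * l4 + 2 * F0 * k1 * l3 * l3
      + 2 * F1 * F1 * k2 * l1 * l1 + (-8) * F0 * F2 * k2 * l1 * l1
      + (-4) * F0 * F3 * k2 * l1 * l2 + (-1) * F1 * F3 * k2 * l1 * l3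
      + (-4) * F0 * F4 * k2 * l1 * l3 + (-6) * F0 * k2 * l1 * l4
      + (-2) * F0 * k2 * l2 * l3 + (-1) * F1 * k2 * l2 * l4
      + (-4) * F0 * F3 * k3 * l1 * l1 + (-1) * F1 * F3 * k3 * l1 * l2
      + (-4) * F0 * F4 * k3 * l1 * l2 + (-4) * F1 * F4 * k3 * l1 * l3
      + 4 * F0 * k3 * l1 * l3 + (-2) * F1 * k3 * l1 * l4
      + (-2) * F0 * k3 * l2 * l2 + (-2) * F1 * k3 * l2 * l3
      + (-2) * F2 * k3 * l2 * l4 + (-1) * F3 * k3 * l3 * l4
      + F1 * F3 * k4 * l1 * l1 + (-4) * F0 * F4 * k4 * l1 * l1
      + (-6) * F0 * k4 * l1 * l2 + (-2) * F1 * k4 * l1 * l3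
      + 2 * F2 * k4 * l1 * l4 + k4 * l4 * l4)
  + k2 * ((-2) * F0 * k2 * l1 * l3 + 2 * F0 * k2 * l2 * l2 + F1 * k2 * l2 * l3
      + (-2) * F0 * k3 * l1 * l2 + (-2) * F1 * k3 * l1 * l3
      + F1 * k3 * l2 * l2 + 2 * F2 * k3 * l2 * l3 + F3 * k3 * l3 * l3
      + (-2) * F0 * k4 * l1 * l1 + (-1) * F1 * k4 * l1 * l2
      + (-2) * F2 * k4 * l1 * l3 + (-1) * k4 * l3 * l4)
  + k3 * (2 * F0 * k3 * l1 * l1 + F3 * k3 * l2 * l3 + 2 * F4 * k3 * l3 * l3
      + 2 * k3 * l3 * l4 + (-1) * F3 * k4 * l1 * l3 + (-1) * k4 * l2 * l4
      + 2 * k4 * l3 * l3)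
  + l1 * (k4 * k4 * l4).
Proof. rewrite /B14 /=; ring. Qed.

Lemma B24_decomp :
  B24 f0 f1 f2 f3 f4 k1 k2 k3 k4 l1 l2 l3 l4 =
  k1 * ((-1) * F1 * F1 * F3 * k1 * l1 * l1 + 4 * F0 * F2 * F3 * k1 * l1 * l1
      + 8 * F0 * F0 * k1 * l1 * l1 + 2 * F0 * F3 * F3 * k1 * l1 * l2
      + 4 * F0 * F1 * k1 * l1 * l2 + 4 * F1 * F1 * k1 * l1 * l3
      + 4 * F0 * F3 * F4 * k1 * l1 * l3 + (-8) * F0 * F2 * k1 * l1 * l3
      + 4 * F0 * F3 * k1 * l1 * l4 + F1 * F3 * k1 * l2 * l4
      + (-1) * F1 * F3 * k1 * l3 * l3 + 2 * F0 * F3 * F3 * k2 * l1 * l1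
      + 4 * F0 * F1 * k2 * l1 * l1 + 2 * F1 * F1 * k2 * l1 * l2
      + 4 * F0 * F3 * F4 * k2 * l1 * l2 + 4 * F1 * F2 * k2 * l1 * l3
      + 8 * F0 * F4 * F4 * k2 * l1 * l3 + (-8) * F0 * F3 * k2 * l1 * l3
      + F1 * F3 * k2 * l1 * l4 + 4 * F0 * F4 * k2 * l1 * l4
      + 2 * F0 * F3 * k2 * l2 * l2 + F1 * F3 * k2 * l2 * l3
      + 4 * F0 * F4 * k2 * l2 * l3 + 2 * F1 * F4 * k2 * l2 * l4
      + 4 * F0 * k2 * l3 * l3 + 2 * F1 * k2 * l3 * l4
      + 4 * F1 * F1 * k3 * l1 * l1 + 4 * F0 * F3 * F4 * k3 * l1 * l1
      + (-8) * F0 * F2 * k3 * l1 * l1 + 4 * F1 * F2 * k3 * l1 * l2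
      + 8 * F0 * F4 * F4 * k3 * l1 * l2 + (-8) * F0 * F3 * k3 * l1 * l2
      + F3 * F3 * F3 * k3 * l1 * l3 + (-4) * F2 * F3 * F4 * k3 * l1 * l3
      + 8 * F2 * F2 * k3 * l1 * l3 + 8 * F1 * F4 * F4 * k3 * l1 * l3
      + (-8) * F1 * F3 * k3 * l1 * l3 + 4 * F1 * F4 * k3 * l1 * l4
      + (-4) * F0 * k3 * l1 * l4 + 4 * F0 * F4 * k3 * l2 * l2
      + 4 * F1 * F4 * k3 * l2 * l3 + 4 * F0 * k3 * l2 * l3
      + (-1) * F3 * F3 * k3 * l2 * l4 + 4 * F2 * F4 * k3 * l2 * l4
      + 4 * F1 * k3 * l3 * l3 + 4 * F2 * k3 * l3 * l4
      + 4 * F0 * F3 * k4 * l1 * l1 + F1 * F3 * k4 * l1 * l2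
      + 4 * F0 * F4 * k4 * l1 * l2 + 4 * F1 * F4 * k4 * l1 * l3
      + (-4) * F0 * k4 * l1 * l3 + 2 * F1 * k4 * l1 * l4
      + 2 * F0 * k4 * l2 * l2 + 2 * F1 * k4 * l2 * l3 + 2 * F2 * k4 * l2 * l4
      + F3 * k4 * l3 * l4)
  + k2 * (2 * F0 * F3 * k2 * l1 * l2 + 4 * F0 * F4 * k2 * l1 * l3
      + 2 * F0 * k2 * l1 * l4 + 2 * F0 * k2 * l2 * l3 + F1 * k2 * l2 * l4
      + F1 * F3 * k3 * l1 * l2 + 4 * F0 * F4 * k3 * l1 * l2
      + 4 * F1 * F4 * k3 * l1 * l3 + 4 * F0 * k3 * l1 * l3
      + 2 * F1 * k3 * l1 * l4 + 2 * F0 * k3 * l2 * l2 + 2 * F1 * k3 * l2 * l3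
      + 2 * F2 * k3 * l2 * l4 + F3 * k3 * l3 * l4 + F1 * F3 * k4 * l1 * l1
      + 2 * F1 * F4 * k4 * l1 * l2 + (-1) * F3 * F3 * k4 * l1 * l3
      + 4 * F2 * F4 * k4 * l1 * l3 + 2 * F2 * k4 * l1 * l4 + F1 * k4 * l2 * l2
      + 2 * F2 * k4 * l2 * l3 + F3 * k4 * l2 * l4 + F3 * k4 * l3 * l3
      + 2 * F4 * k4 * l3 * l4 + k4 * l4 * l4)
  + k3 * ((-1) * F1 * F3 * k3 * l1 * l1 + 4 * F0 * k3 * l1 * l2
      + 4 * F1 * k3 * l1 * l3 + F3 * k3 * l2 * l4 + (-1) * F3 * k3 * l3 * l3
      + 2 * F1 * k4 * l1 * l2 + 4 * F2 * k4 * l1 * l3 + F3 * k4 * l1 * l4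
      + F3 * k4 * l2 * l3 + 2 * F4 * k4 * l2 * l4 + 2 * k4 * l3 * l4)
  + l2 * (k4 * k4 * l4).
Proof. rewrite /B24 /=; ring. Qed.

Lemma B34_decomp :
  B34 f0 f1 f2 f3 f4 k1 k2 k3 k4 l1 l2 l3 l4 =
  k1 * (2 * F1 * F1 * F2 * k1 * l1 * l1 + (-8) * F0 * F2 * F2 * k1 * l1 * l1
      + 4 * F0 * F1 * F3 * k1 * l1 * l1 + (-8) * F0 * F0 * F4 * k1 * l1 * l1
      + F1 * F1 * F3 * k1 * l1 * l2 + (-4) * F0 * F2 * F3 * k1 * l1 * l2
      + (-8) * F0 * F0 * k1 * l1 * l2 + (-2) * F0 * F3 * F3 * k1 * l1 * l3
      + (-4) * F0 * F1 * k1 * l1 * l3 + 2 * F1 * F1 * k1 * l1 * l4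
      + (-8) * F0 * F2 * k1 * l1 * l4 + (-2) * F0 * F3 * k1 * l2 * l4
      + 2 * F0 * F3 * k1 * l3 * l3 + F1 * F1 * F3 * k2 * l1 * l1
      + (-4) * F0 * F2 * F3 * k2 * l1 * l1 + (-8) * F0 * F0 * k2 * l1 * l1
      + 2 * F1 * F1 * F4 * k2 * l1 * l2 + (-8) * F0 * F2 * F4 * k2 * l1 * l2
      + (-4) * F0 * F1 * k2 * l1 * l2 + (-2) * F1 * F1 * k2 * l1 * l3
      + (-4) * F0 * F3 * F4 * k2 * l1 * l3 + (-4) * F0 * F3 * k2 * l1 * l4
      + F1 * F1 * k2 * l2 * l2 + (-4) * F0 * F2 * k2 * l2 * l2
      + (-4) * F0 * F3 * k2 * l2 * l3 + (-4) * F0 * F4 * k2 * l2 * l4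
      + (-4) * F0 * k2 * l3 * l4 + (-2) * F0 * F3 * F3 * k3 * l1 * l1
      + (-4) * F0 * F1 * k3 * l1 * l1 + (-2) * F1 * F1 * k3 * l1 * l2
      + (-4) * F0 * F3 * F4 * k3 * l1 * l2 + (-4) * F1 * F2 * k3 * l1 * l3
      + (-8) * F0 * F4 * F4 * k3 * l1 * l3 + 8 * F0 * F3 * k3 * l1 * l3
      + (-1) * F1 * F3 * k3 * l1 * l4 + (-4) * F0 * F4 * k3 * l1 * l4
      + (-2) * F0 * F3 * k3 * l2 * l2 + (-1) * F1 * F3 * k3 * l2 * l3
      + (-4) * F0 * F4 * k3 * l2 * l3 + (-2) * F1 * F4 * k3 * l2 * l4
      + (-4) * F0 * k3 * l3 * l3 + (-2) * F1 * k3 * l3 * l4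
      + 2 * F1 * F1 * k4 * l1 * l1 + (-8) * F0 * F2 * k4 * l1 * l1
      + (-4) * F0 * F3 * k4 * l1 * l2 + (-1) * F1 * F3 * k4 * l1 * l3
      + (-4) * F0 * F4 * k4 * l1 * l3 + (-6) * F0 * k4 * l1 * l4
      + (-2) * F0 * k4 * l2 * l3 + (-1) * F1 * k4 * l2 * l4)
  + k2 * (F1 * F1 * k2 * l1 * l2 + (-4) * F0 * F2 * k2 * l1 * l2
      + (-2) * F0 * F3 * k2 * l1 * l3 + (-2) * F0 * k2 * l2 * l4
      + 2 * F0 * k2 * l3 * l3 + (-4) * F0 * F3 * k3 * l1 * l2
      + (-1) * F1 * F3 * k3 * l1 * l3 + (-4) * F0 * F4 * k3 * l1 * l3
      + (-2) * F0 * k3 * l1 * l4 + 2 * F0 * k3 * l2 * l3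
      + (-1) * F1 * k3 * l2 * l4 + 2 * F1 * k3 * l3 * l3
      + (-2) * F0 * F3 * k4 * l1 * l1 + (-4) * F0 * F4 * k4 * l1 * l2
      + (-2) * F1 * F4 * k4 * l1 * l3 + (-1) * F1 * k4 * l1 * l4
      + (-2) * F0 * k4 * l2 * l2 + (-1) * F1 * k4 * l2 * l3)
  + k3 * (2 * F0 * F3 * k3 * l1 * l1 + (-4) * F0 * k3 * l1 * l3
      + 2 * F0 * k3 * l2 * l2 + 2 * F1 * k3 * l2 * l3 + 2 * F2 * k3 * l3 * l3
      + F3 * k3 * l3 * l4 + (-4) * F0 * k4 * l1 * l2
      + (-2) * F1 * k4 * l1 * l3 + F3 * k4 * l3 * l3 + 2 * F4 * k4 * l3 * l4
      + k4 * l4 * l4)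
  + l3 * (k4 * k4 * l4).
Proof. rewrite /B34 /=; ring. Qed.

Lemma Kummer_decomp :
  Kummer f0 f1 f2 f3 f4 k1 k2 k3 k4 =
  k2 * k2 * (k4 ^+ 2) + k1 * k3 * ((-4) * k4 ^+ 2)
 + k1 * k1 * ((-2) * k4 * (2 * F0 * k1 + F1 * k2 + 2 * F2 * k3))
 + k1 * k2 * ((-2) * k4 * F3 * k3)
 + k1 * k3 * ((-4) * k4 * F4 * k3)
 + k2 * k3 * ((-2) * k4 * k3)
 + k1 * k1 * ((F1 ^+ 2 - 4 * F0 * F2) * k1 ^+ 2 - 4 * F0 * F3 * k1 * k2
     - 2 * F1 * F3 * k1 * k3 - 4 * F0 * F4 * k2 ^+ 2
     + 4 * (F0 - F1 * F4) * k2 * k3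
     + (F3 ^+ 2 + 2 * F1 - 4 * F2 * F4) * k3 ^+ 2)
 + k1 * k2 * ((-4) * F0 * k2 ^+ 2 - 4 * F1 * k2 * k3 - 4 * F2 * k3 ^+ 2)
 + k1 * k3 * ((-2) * F3 * k3 ^+ 2)
 + k3 * k3 * (k3 ^+ 2).
Proof. rewrite /Kummer /=; ring. Qed.
End Decompositions.

Section Ideals.
Implicit Types (p q r s : ZK) (m : 'X_{1..4}).

Lemma in_I0 : in_I 0.
Proof. by exists (fun _ => 0); rewrite big1 // => j _; rewrite mul0r. Qed.

Lemma in_ID p q : in_I p -> in_I q -> in_I (p + q).
Proof.
move=> [a ->] [b ->]; exists (fun j => a j + b j); rewrite -big_split.
by apply: eq_bigr => j _; rewrite mulrDl.
Qed.

Lemma in_IMl q p : in_I p -> in_I (q * p).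
Proof.
move=> [a ->]; exists (fun j => q * a j); rewrite mulr_sumr.
by apply: eq_bigr => j _; rewrite mulrA.
Qed.

Lemma in_IMr p q : in_I p -> in_I (p * q).
Proof. by rewrite mulrC; apply: in_IMl. Qed.

Lemma in_I_kvar j : (j < 3)%N -> in_I (kvar j).
Proof.
move=> lt_j3; exists (fun l => (val l == j)%:R).
rewrite (bigD1 (Ordinal lt_j3)) //= eqxx mul1r big1 ?addr0 // => l.
by rewrite -val_eqE /= => /negbTE ->; rewrite mul0r.
Qed.

Lemma in_I20 : in_I2 0.
Proof.
exists (fun _ _ => 0); rewrite big1 // => j _; rewrite big1 // => l _.
by rewrite mul0r.
Qed.

Lemma in_I2D p q : in_I2 p -> in_I2 q -> in_I2 (p + q).
Proof.
move=> [a ->] [b ->]; exists (fun j l => a j l + b j l); rewrite -big_split.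
apply: eq_bigr => j _; rewrite -big_split.
by apply: eq_bigr => l _; rewrite mulrDl.
Qed.

Lemma in_I2Ml q p : in_I2 p -> in_I2 (q * p).
Proof.
move=> [a ->]; exists (fun j l => q * a j l); rewrite mulr_sumr.
apply: eq_bigr => j _; rewrite mulr_sumr.
by apply: eq_bigr => l _; rewrite mulrA.
Qed.

Lemma in_I2Mr p q : in_I2 p -> in_I2 (p * q).
Proof. by rewrite mulrC; apply: in_I2Ml. Qed.

Lemma in_I2_mul p q : in_I p -> in_I q -> in_I2 (p * q).
Proof.
move=> [a ->] [b ->]; exists (fun j l => a j * b l).
rewrite mulr_suml; apply: eq_bigr => j _; rewrite mulr_sumr.
by apply: eq_bigr => l _; rewrite mulrACA.
Qed.

Lemma in_I2_mul3 p q r : in_I p -> in_I q -> in_I2 (p * q * r).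
Proof. by move=> Ip Iq; apply/in_I2Mr/in_I2_mul. Qed.

Lemma in_I2_in_I p : in_I2 p -> in_I p.
Proof.
move=> [a ->]; exists (fun j => \sum_(l < 3) a j l * kvar l).
apply: eq_bigr => j _; rewrite mulr_suml; apply: eq_bigr => l _.
by rewrite -!mulrA (mulrC (kvar j)).
Qed.

Definition eqmodI2 p q := in_I2 (p - q).

Lemma eqmodI2_in_I p q : eqmodI2 p q -> in_I q -> in_I p.
Proof.
by move=> pq Iq; rewrite -(subrK q p); apply: in_ID => //; apply: in_I2_in_I.
Qed.

Lemma eqmodI2_in_I2 p q : eqmodI2 p q -> in_I2 q -> in_I2 p.
Proof. by move=> pq Iq; rewrite -(subrK q p); apply: in_I2D. Qed.

Lemma eqmodI2_trans q p r : eqmodI2 p q -> eqmodI2 q r -> eqmodI2 p r.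
Proof.
by move=> pq qr; rewrite /eqmodI2 -(subrK q p) -addrA; apply: in_I2D.
Qed.

Lemma eqmodI2M p q r s :
  eqmodI2 p q -> eqmodI2 r s -> eqmodI2 (p * r) (q * s).
Proof.
move=> pq rs; rewrite /eqmodI2.
have -> : p * r - q * s = (p - q) * r + q * (r - s) by ring.
by apply: in_I2D; [apply: in_I2Mr | apply: in_I2Ml].
Qed.

Lemma eqmodI2X p q n : eqmodI2 p q -> eqmodI2 (p ^+ n) (q ^+ n).
Proof.
move=> pq; elim: n => [|n IHn]; last by rewrite !exprS; apply: eqmodI2M.
by rewrite /eqmodI2 !expr0 subrr; apply: in_I20.
Qed.

(* The total degree of a monomial in k1, k2, k3: I and I^2 consist of the
   polynomials supported on monomials with [ideg] at least 1, resp. 2. *)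
Definition ideg m : nat := (m (inord 0) + m (inord 1) + m (inord 2))%N.

Lemma idegD m1 m2 : ideg (m1 + m2)%MM = (ideg m1 + ideg m2)%N.
Proof. by rewrite /ideg !mnmDE; lia. Qed.

Lemma ideg_kvar j : (j < 4)%N -> ideg U_(inord j)%MM = (j < 3)%N.
Proof.
rewrite /ideg !mnm1E.
by case: j => [|[|[|[|]]]] //= _; rewrite -!val_eqE /= !inordK.
Qed.

Lemma ideg_coefMX p u m : (p * 'X_[u])@_m != 0 -> (ideg u <= ideg m)%N.
Proof.
rewrite -mcoeff_msupp (perm_mem (msuppMX p u)) => /mapP [m' _ ->].
by rewrite idegD leq_addr.
Qed.

Lemma ideg_gt0_exists m :
  (0 < ideg m)%N -> exists2 j, (j < 3)%N & (0 < m (inord j))%N.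
Proof.
rewrite /ideg; have [m0|] := posnP (m (inord 0)); last by exists 0%N.
have [m1|] := posnP (m (inord 1)); last by exists 1%N.
have [m2|] := posnP (m (inord 2)); last by exists 2%N.
by rewrite m0 m1 m2.
Qed.

Lemma monomial_split m j :
  (j < 3)%N -> (0 < m (inord j))%N ->
  'X_[m] = 'X_[m - U_(inord j)] * kvar j
  /\ ideg (m - U_(inord j))%MM = (ideg m).-1.
Proof.
move=> lt_j3 mj_gt0.
have le_Um : (U_(inord j) <= m)%MM.
  by apply/mnm_lepP => i; rewrite mnm1E; case: eqP => [<-|].
split; first by rewrite /kvar -mpolyXD submK.
by rewrite -{2}(submK le_Um) idegD ideg_kvar ?lt_j3 ?addn1 //; lia.
Qed.

Lemma monomial_in_I m : (0 < ideg m)%N -> in_I 'X_[m].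
Proof.
move=> /ideg_gt0_exists [j lt_j3 /(monomial_split lt_j3) [-> _]].
exact/in_IMl/in_I_kvar.
Qed.

Lemma monomial_in_I2 m : (1 < ideg m)%N -> in_I2 'X_[m].
Proof.
move=> ideg_gt1; have /ideg_gt0_exists [j lt_j3] : (0 < ideg m)%N by lia.
move=> /(monomial_split lt_j3) [-> ideg_sub].
by apply/in_I2_mul/in_I_kvar => //; apply: monomial_in_I; lia.
Qed.

Lemma coef_in_I p : (forall m, ideg m = 0%N -> p@_m = 0) -> in_I p.
Proof.
move=> p_low; rewrite (mpolyE p) big_seq; apply: big_ind => //.
- exact: in_I0.
- exact: in_ID.
move=> m; rewrite mcoeff_msupp -mul_mpolyC => pm_neq0; apply/in_IMl.
by apply: monomial_in_I; rewrite lt0n; apply: contra pm_neq0 => /eqP/p_low->.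
Qed.

Lemma in_I2P p : in_I2 p <-> forall m, (ideg m < 2)%N -> p@_m = 0.
Proof.
split=> [[a ->] m ideg_m | p_low].
  rewrite raddf_sum big1 // => j _; rewrite raddf_sum big1 // => l _.
  have lt_4 (k : 'I_3) : (k < 4)%N by rewrite (ltn_trans (ltn_ord k)).
  rewrite /kvar -mpolyXD; apply/eqP; apply: contraTT ideg_m.
  by move=> /ideg_coefMX; rewrite idegD !ideg_kvar // !ltn_ord -leqNgt.
rewrite (mpolyE p) big_seq; apply: big_ind => //.
- exact: in_I20.
- exact: in_I2D.
move=> m; rewrite mcoeff_msupp -mul_mpolyC => pm_neq0; apply/in_I2Ml.
by apply: monomial_in_I2; rewrite ltnNge; apply: contra pm_neq0 => /p_low->.
Qed.

Lemma in_I_from_kvarM j p : (j < 3)%N -> in_I2 (kvar j * p) -> in_I p.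
Proof.
move=> lt_j3 /in_I2P Ijp; apply: coef_in_I => m ideg_m.
rewrite -(mcoeffMX p U_(inord j)) mulrC; apply: Ijp.
by rewrite idegD ideg_kvar ?lt_j3 ?ideg_m //; lia.
Qed.

Lemma in_I2_from_kvar3M p : in_I2 (kvar 3 * p) -> in_I2 p.
Proof.
move=> /in_I2P I3p; apply/in_I2P => m ideg_m.
rewrite -(mcoeffMX p U_(inord 3)) mulrC.
by apply: I3p; rewrite idegD ideg_kvar.
Qed.

End Ideals.

Definition head_in_I (x : 'I_4 -> ZK) := forall j, (j < 3)%N -> in_I (c4 x j).

Definition near_identity (x : 'I_4 -> ZK) (M : nat) :=
  head_in_I x /\ eqmodI2 (c4 x 3) (kvar 3 ^+ M).

Lemma head_in_IP x :
  head_in_I x -> [/\ in_I (c4 x 0), in_I (c4 x 1) & in_I (c4 x 2)].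
Proof. by move=> Ix; split; apply: Ix. Qed.

Section UchidaRecursion.
Variables f0 f1 f2 f3 f4 : int.
Local Notation delta := (delta f0 f1 f2 f3 f4).
Local Notation Bdiag := (Bdiag f0 f1 f2 f3 f4).
Local Notation congK := (congK f0 f1 f2 f3 f4).

Lemma KummerZ_in_I2 : in_I2 (KummerZ f0 f1 f2 f3 f4).
Proof.
rewrite /KummerZ Kummer_decomp.
by repeat apply: in_I2D; apply: in_I2_mul3; apply: in_I_kvar.
Qed.

Lemma congK_eqmodI2 p q : congK p q -> eqmodI2 p q.
Proof.
by move=> [g Kpq]; rewrite /eqmodI2 Kpq; apply/in_I2Ml/KummerZ_in_I2.
Qed.

Lemma delta_head_in_I x (i : 'I_4) :
  head_in_I x -> (i < 3)%N -> in_I (delta i x).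
Proof.
move=> /head_in_IP [Ix0 Ix1 Ix2].
case: i => [[|[|[|m]]] lt_i4] //= _; rewrite /delta /=;
  rewrite ?B14_decomp ?B24_decomp ?B34_decomp; apply: in_IMl;
  by repeat apply: in_ID; apply: in_IMr.
Qed.

Lemma delta_last_eqmodI2 x : head_in_I x ->
  eqmodI2 (delta (inord 3) x) (c4 x 3 ^+ 4).
Proof.
move=> /head_in_IP [Ix0 Ix1 Ix2]; rewrite /eqmodI2 /delta inordK //= B44_decomp.
set x4 := c4 x 3; set rest := (X in x4 * x4 * x4 * x4 + X - _).
have -> : x4 * x4 * x4 * x4 + rest - x4 ^+ 4 = rest by ring.
by repeat apply: in_I2D; apply: in_I2_mul3.
Qed.

Lemma Bdiag_head_in_I2 x y (i : 'I_4) :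
  head_in_I x -> head_in_I y -> (i < 3)%N -> in_I2 (Bdiag i x y).
Proof.
move=> /head_in_IP [Ix0 Ix1 Ix2] /head_in_IP [Iy0 Iy1 Iy2].
case: i => [[|[|[|m]]] lt_i4] //= _; rewrite /Bdiag /=;
  rewrite ?B11_decomp ?B22_decomp ?B33_decomp;
  by repeat apply: in_I2D; apply: in_I2_mul3.
Qed.

Lemma Bdiag_last_eqmodI2 x y : head_in_I x -> head_in_I y ->
  eqmodI2 (Bdiag (inord 3) x y) (c4 x 3 ^+ 2 * c4 y 3 ^+ 2).
Proof.
move=> /head_in_IP [Ix0 Ix1 Ix2] /head_in_IP [Iy0 Iy1 Iy2].
rewrite /eqmodI2 /Bdiag inordK //= B44_decomp.
set x4 := c4 x 3; set y4 := c4 y 3.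
set rest := (X in x4 * x4 * y4 * y4 + X - _).
have -> : x4 * x4 * y4 * y4 + rest - x4 ^+ 2 * y4 ^+ 2 = rest by ring.
by repeat apply: in_I2D; apply: in_I2_mul3.
Qed.

Lemma near_identity_double x y M : near_identity x M ->
  (forall i, congK (y i) (delta i x)) -> near_identity y (4 * M).
Proof.
move=> [Ix x4M] yx; have Ey i := congK_eqmodI2 (yx i).
split=> [j lt_j3 | ].
  apply: eqmodI2_in_I (Ey _) _; apply: delta_head_in_I => //.
  by rewrite inordK // (ltn_trans lt_j3).
apply: eqmodI2_trans (Ey _) _; apply: eqmodI2_trans (delta_last_eqmodI2 Ix) _.
by rewrite mulnC exprM; apply: eqmodI2X.
Qed.

Lemma near_identity_add x y z A B N :
  near_identity x A -> near_identity y B -> (2 * A + 2 * B)%N = N.+1 ->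
  (forall i, congK (z i * 'X_i) (Bdiag i x y)) -> near_identity z N.
Proof.
move=> [Ix x4A] [Iy y4B] ABN zxy; have Ez i := congK_eqmodI2 (zxy i).
split=> [j lt_j3 | ].
  apply: (in_I_from_kvarM lt_j3); rewrite mulrC.
  apply: eqmodI2_in_I2 (Ez _) _; apply: Bdiag_head_in_I2 => //.
  by rewrite inordK // (ltn_trans lt_j3).
apply: in_I2_from_kvar3M; rewrite mulrBr -exprS mulrC.
change (eqmodI2 (z (inord 3) * 'X_(inord 3)) (kvar 3 ^+ N.+1)).
apply: eqmodI2_trans (Ez _) _.
apply: eqmodI2_trans (Bdiag_last_eqmodI2 Ix Iy) _.
by rewrite -ABN exprD !(mulnC 2) !exprM; apply: eqmodI2M; apply: eqmodI2X.
Qed.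

End UchidaRecursion.

Theorem lemma3p6 (f0 f1 f2 f3 f4 : int) (mu : nat -> 'I_4 -> {mpoly int[4]}) :
  genus2_quintic f0 f1 f2 f3 f4 ->
  uchida_seq f0 f1 f2 f3 f4 mu ->
  forall m : nat, (1 <= m)%N ->
    (forall i : 'I_4, (i < 3)%N -> in_I (mu m i)) /\
    in_I2 (mu m (inord 3) - kvar 3 ^+ (m ^ 2)).
Proof.
move=> _ [_ mu1 mu_even mu_odd].
suff near_mu m : (1 <= m)%N -> near_identity (mu m) (m ^ 2).
  move=> m /near_mu [Imu mu4]; split=> // i lt_i3.
  by rewrite -(inord_val i); apply: Imu.
elim/ltn_ind: m => m IHm m_gt0.
have [-> | m_neq1] := eqVneq m 1%N.
  split=> [j lt_j3 | ]; rewrite /c4 mu1; first exact: in_I_kvar.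
  by rewrite /eqmodI2 expr1 subrr; apply: in_I20.
have := odd_double_half m; set k := m./2.
case: (odd m) => /= m_eq; have k_gt0 : (0 < k)%N by lia.
  rewrite -m_eq add1n.
  apply: (near_identity_add (IHm k.+1 _ _) (IHm k _ _)); [lia.. |].
  by move=> i; apply: mu_odd.
rewrite -m_eq add0n (_ : k.*2 ^ 2 = 4 * k ^ 2)%N; last first.
  by rewrite -mul2n expnMn.
apply: (near_identity_double (IHm k _ _)); [lia.. |].
by move=> i; apply: mu_even.
Qed.
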